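(* Let $\rho>0$ be fixed. The class of $\rho$-dense graphs in $\mathbb{R}^d$ has polynomial expansion bounded by $f(r)=\rho\, r^{O(d)}$.
   Context: A set of objects $F$ in $\mathbb{R}^d$ has density $\rho$ if any object $o$ (not necessarily in $F$) intersects at most $\rho$ objects of $F$ with diameter at least that of $o$. A graph is $\rho$-dense (in $\mathbb{R}^d$) if it is the intersection graph of a set of objects in $\mathbb{R}^d$ with density $\rho$. A graph is $r$-shallow if some vertex reaches every vertex by a path with at most $r$ edges; an $r$-shallow minor of $G$ is a minor (edge contractions, edge/vertex deletions) whose clusters induce $r$-shallow subgraphs; $\nabla_r(G)$ is the supremum of $|E(K)|/|V(K)|$ over all $r$-shallow minors $K$ of $G$. A class has expansion bounded by $f$ if $\sup_{G}\nabla_r(G)\le f(r)$ for all $r$. *)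

From HB Require Import structures.
From mathcomp Require Import all_boot all_order all_algebra.
From mathcomp Require Import boolp classical_sets reals.
Set Implicit Arguments. Unset Strict Implicit. Unset Printing Implicit Defensive.
Import Order.TTheory GRing.Theory Num.Theory.
Local Open Scope classical_set_scope.
Local Open Scope ring_scope.

Section Geometry.
Variables (R : realType) (d : nat).

Definition point := 'I_d -> R.

Definition dist (x y : point) : R := Num.sqrt (\sum_(i < d) (x i - y i) ^+ 2).

(* a (geometric) object: an arbitrary subset of R^d; we require boundedness *)
Definition bounded_obj (A : set point) : Prop :=
  exists M : R, forall x y, A x -> A y -> dist x y <= M.

(* diameter = sup of pairwise distances (0 for the empty set) *)
Definition diam (A : set point) : R :=
  sup [set t | exists x y, A x /\ A y /\ t = dist x y].

Definition has_density (V : finType) (obj : V -> set point) (rho : R) : Prop :=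
  forall o : set point, bounded_obj o ->
    (#|[set v : V | `[< obj v `&` o !=set0 >] && (diam o <= diam (obj v))]|%:R
       <= rho).

Definition rho_dense (V : finType) (e : rel V) (rho : R) : Prop :=
  exists obj : V -> set point,
    (forall v, bounded_obj (obj v)) /\
    has_density obj rho /\
    (forall u v, e u v = (u != v) && `[< obj u `&` obj v !=set0 >]).

End Geometry.

Local Close Scope classical_set_scope.

Section Minors.
Variables (V : finType) (e : rel V).

Definition shallow_cluster (r : nat) (C : {set V}) : Prop :=
  exists2 c, c \in C &
    forall v, v \in C -> exists s : seq V,
      [/\ size s <= r, path (fun x y => e x y && (x \in C) && (y \in C)) c s
        & last c s = v]%N.

Definition shallow_minor (r : nat) (W : finType) (eK : rel W)
  (cl : W -> {set V}) : Prop :=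
  [/\ forall a, shallow_cluster r (cl a),
      forall a b, a != b -> cl a :&: cl b == finset.set0
    & forall a b, a != b -> eK a b ->
        exists x y, [/\ x \in cl a, y \in cl b & e x y]].

Definition edges (W : finType) (eK : rel W) : {set {set W}} :=
  [set E : {set W} | [exists a, exists b,
      [&& a != b, eK a b & E == [set a; b]]]].

(* nabla_r(G) = sup of |E(K)|/|V(K)| over r-shallow minors K (0/0 = 0) *)
Definition nabla (R : realType) (r : nat) : R :=
  sup [set q : R | exists (W : finType) (eK : rel W) (cl : W -> {set V}),
         shallow_minor r eK cl /\ q = #|edges eK|%:R / #|W|%:R]%classic.

End Minors.

From Pilot Require Import Defs.
From mathcomp Require Import all_boot all_order all_algebra.
From mathcomp Require Import boolp classical_sets reals.
From mathcomp Require Import ring lra zify.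
Import Order.TTheory GRing.Theory Num.Theory.

(* Let K be an r-shallow minor of a rho-dense graph G with clusters cl a, and
   let D a be the largest diameter of an object in cl a.  Orient every edge ab
   of K towards the endpoint with the larger D.  If D a <= D b, walk at most r
   steps from the centre of cl a to the edge ab and at most 2 r steps inside
   cl b to its largest object: somewhere on the way cl b contains an object of
   diameter >= D a meeting the ball of radius (3 r + 1) D a around a point of
   the centre object of a.  That ball is covered by (16 (9 r + 5))^d sets of
   diameter <= D a, each of which meets at most rho objects at least as large;
   since the clusters are disjoint, every vertex of K has out-degree at most
   rho (16 (9 r + 5))^d, hence |E(K)| <= rho (16 (9 r + 5))^d |V(K)|.  The
   cover is a grid of mesh D / m with m^2 just above d; the cells meeting the
   ball correspond to lattice points in a ball of radius O(r sqrt d), of which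
   there are only 2^O(d) r^d. *)

Set Implicit Arguments.
Unset Strict Implicit.
Unset Printing Implicit Defensive.
Local Open Scope ring_scope.

Lemma cauchy_schwarz (R : realFieldType) (I : finType) (a b : I -> R) :
  (\sum_i a i * b i) ^+ 2 <= (\sum_i a i ^+ 2) * (\sum_i b i ^+ 2).
Proof.
have sq_ge0 : 0 <= \sum_i \sum_j (a i * b j - a j * b i) ^+ 2.
  by apply: sumr_ge0 => i _; apply: sumr_ge0 => j _; exact: sqr_ge0.
have E1 : (\sum_i a i ^+ 2) * (\sum_i b i ^+ 2) =
          \sum_i \sum_j a i ^+ 2 * b j ^+ 2.
  by rewrite big_distrl /=; apply: eq_bigr => i _; rewrite big_distrr.
have E2 : (\sum_i a i ^+ 2) * (\sum_i b i ^+ 2) =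
          \sum_i \sum_j a j ^+ 2 * b i ^+ 2.
  rewrite mulrC big_distrl /=; apply: eq_bigr => i _; rewrite big_distrr /=.
  by apply: eq_bigr => j _; rewrite mulrC.
have E3 : (\sum_i a i * b i) ^+ 2 = \sum_i \sum_j (a i * b i) * (a j * b j).
  by rewrite expr2 big_distrl /=; apply: eq_bigr => i _; rewrite big_distrr.
have lagrange : \sum_i \sum_j (a i * b j - a j * b i) ^+ 2 =
   (\sum_i \sum_j a i ^+ 2 * b j ^+ 2) + (\sum_i \sum_j a j ^+ 2 * b i ^+ 2)
   - 2 * \sum_i \sum_j (a i * b i) * (a j * b j).
  rewrite -big_split /= big_distrr /= -sumrB; apply: eq_bigr => i _.
  rewrite big_distrr /= -big_split /= -sumrB; apply: eq_bigr => j _; ring.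
by rewrite -E1 -E2 -E3 in lagrange; rewrite lagrange in sq_ge0; lra.
Qed.

Section Euclid.
Variables (R : realType) (d : nat).
Local Notation point := (Pilot.Defs.point R d).
Implicit Types (x y z : point) (A : set point).
Local Open Scope classical_set_scope.

Lemma dist_ge0 x y : 0 <= dist x y.
Proof. exact: sqrtr_ge0. Qed.

Lemma dist_leE x y t : 0 <= t ->
  (dist x y <= t) = (\sum_i (x i - y i) ^+ 2 <= t ^+ 2).
Proof.
by move=> t0; rewrite /dist -[in RHS]ler_sqrt ?sqr_ge0 // sqrtr_sqr ger0_norm.
Qed.

Lemma distC x y : dist x y = dist y x.
Proof. by rewrite /dist; congr Num.sqrt; apply: eq_bigr => i _; ring. Qed.

Lemma distxx x : dist x x = 0.
Proof.
by rewrite /dist big1 ?sqrtr0 // => i _; rewrite subrr expr0n.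
Qed.

Lemma dist_triangle x y z : dist x z <= dist x y + dist y z.
Proof.
set A := \sum_i (x i - y i) ^+ 2; set B := \sum_i (y i - z i) ^+ 2.
have A0 : 0 <= A by apply: sumr_ge0 => i _; exact: sqr_ge0.
have B0 : 0 <= B by apply: sumr_ge0 => i _; exact: sqr_ge0.
have := sqr_sqrtr A0; have := sqr_sqrtr B0.
have := sqrtr_ge0 A; have := sqrtr_ge0 B.
rewrite dist_leE; last by rewrite addr_ge0 ?dist_ge0.
have -> : \sum_i (x i - z i) ^+ 2 =
    A + B + 2 * \sum_i (x i - y i) * (y i - z i).
  rewrite /A /B -big_split big_distrr -big_split /=.
  by apply: eq_bigr => i _; ring.
have := cauchy_schwarz (fun i => x i - y i) (fun i => y i - z i).
rewrite -/A -/B /= /dist -/A -/B; set S := \sum_i _.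
move=> CS gB gA sB sA.
have : S ^+ 2 <= (Num.sqrt A * Num.sqrt B) ^+ 2 by rewrite exprMn sA sB.
have : 0 <= Num.sqrt A * Num.sqrt B by exact: mulr_ge0.
nra.
Qed.

Lemma dist_le_diam A x y : bounded_obj A -> A x -> A y -> dist x y <= diam A.
Proof.
move=> [M HM] Ax Ay; apply: ub_le_sup; last by exists x, y.
by exists M => t [u [v [Au [Av ->]]]]; exact: HM.
Qed.

Lemma diam_le A M : 0 <= M -> (forall x y, A x -> A y -> dist x y <= M) ->
  diam A <= M.
Proof.
move=> M0 HM; rewrite /diam; set S := (X in sup X).
have [->|/set0P [t St]] := eqVneq S set0; first by rewrite sup0.
apply: ge_sup; first by exists t.
by move=> u [x [y [Ax [Ay ->]]]]; exact: HM.
Qed.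

Lemma diam_ge0 A : bounded_obj A -> 0 <= diam A.
Proof.
move=> bA; have [->|/set0P [x Ax]] := eqVneq A set0.
  rewrite /diam (_ : [set t | _] = set0) ?sup0 //.
  by apply/seteqP; split => t // [x [y [[]]]].
by rewrite -(distxx x); exact: dist_le_diam.
Qed.

End Euclid.

Section InducedPaths.
Variables (V : finType) (e : rel V).

Definition induced (C : {set V}) : rel V :=
  fun x y => e x y && (x \in C) && (y \in C).

Lemma induced_sub C : subrel (induced C) e.
Proof. by move=> x y /andP[/andP[]]. Qed.

Lemma path_induced_subset C x s : path (induced C) x s -> {subset s <= C}.
Proof.
elim: s x => [|y s IH] x //= /andP[/andP[_ yC] ps] u.
by rewrite inE => /predU1P[->|/(IH _ ps)].
Qed.

Hypothesis e_sym : symmetric e.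

Lemma shallow_cluster_path r C x y : shallow_cluster e r C ->
  x \in C -> y \in C ->
  exists s, [/\ (size s <= r.*2)%N, path (induced C) x s & last x s = y].
Proof.
move=> [c _ hc] xC yC.
have [s1 [sz1 p1 l1]] := hc x xC; have [s2 [sz2 p2 l2]] := hc y yC.
have sym : induced C =2 (fun u v => induced C v u).
  by move=> u v; rewrite /induced e_sym andbAC.
have back1 : path (induced C) x (rev (belast c s1)).
  by rewrite -l1 rev_path -(eq_path sym).
have last_back1 : last x (rev (belast c s1)) = c.
  (* rev (belast c s1) is rev (c :: s1) minus its head last c s1 *)
  rewrite -l1 -[last _ _]/(last c (last c s1 :: _)) -rev_rcons -lastI.
  by rewrite rev_cons last_rcons.
exists (rev (belast c s1) ++ s2); split.
- by rewrite size_cat size_rev size_belast -addnn leq_add.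
- by rewrite cat_path back1 last_back1.
- by rewrite last_cat last_back1.
Qed.

End InducedPaths.

Section ObjectChains.
Variables (R : realType) (d : nat) (V : finType).
Local Notation point := (Pilot.Defs.point R d).
Variable obj : V -> set point.
Hypothesis obj_bounded : forall v, bounded_obj (obj v).
Variable e : rel V.
Hypothesis e_meet : forall u v, e u v -> exists p, obj u p /\ obj v p.
Local Notation dl v := (diam (obj v)).

Lemma path_dist_le (D : R) y s p q : path e y s ->
  {in y :: s, forall u, dl u <= D} -> obj y p -> obj (last y s) q ->
  dist p q <= (size s).+1%:R * D.
Proof.
elim: s y p => [|u s IH] y p /=.
  move=> _ small yp yq; rewrite mul1r.
  by apply: le_trans (small y (mem_head _ _)); exact: dist_le_diam.
move=> /andP[eyu ps] small yp lq.
have [t [yt ut]] := e_meet eyu.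
have pt : dist p t <= D.
  by apply: le_trans (small y (mem_head _ _)); exact: dist_le_diam.
have tq : dist t q <= (size s).+1%:R * D.
  by apply: IH ps _ ut lq => w ws; apply: small; rewrite inE ws orbT.
apply: le_trans (dist_triangle p t q) _.
by rewrite -[(size s).+2]addn1 natrD mulrDl mul1r; lra.
Qed.

Lemma path_reaches_large (D : R) y s p : 0 <= D -> path e y s ->
  D <= dl (last y s) -> obj y p ->
  exists2 w, w \in y :: s & D <= dl w /\
    exists2 t, obj w t & dist p t <= (size s)%:R * D.
Proof.
move=> D0; elim: s y p => [|u s IH] y p /=.
  move=> _ large yp; exists y; rewrite ?mem_head //; split => //.
  by exists p; rewrite // distxx mul0r.
move=> /andP[eyu ps] large yp.
have [Dy|Dy] := leP D (dl y).
  exists y; rewrite ?mem_head //; split => //.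
  by exists p; rewrite // distxx mulr_ge0.
have [t [yt ut]] := e_meet eyu.
have pt : dist p t <= D by apply: le_trans (ltW Dy); exact: dist_le_diam.
have [w ws [Dw [t' wt' tt']]] := IH u t ps large ut.
exists w; first by rewrite inE ws orbT.
split => //; exists t' => //.
apply: le_trans (dist_triangle p t t') _.
by rewrite -[(size s).+1]addn1 natrD mulrDl mul1r; lra.
Qed.

Lemma shallow_cluster_ball r C (D : R) : shallow_cluster e r C ->
  {in C, forall v, dl v <= D} ->
  exists q, forall x p, x \in C -> obj x p -> dist q p <= r.+1%:R * D.
Proof.
move=> [c cC hc] small.
have [[q cq]|no_pt] := pselect (exists q, obj c q).
  exists q => x p xC xp; have [s [sz ps ls]] := hc x xC.
  have on_path : {in c :: s, forall u, dl u <= D}.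
    move=> u; rewrite inE => /predU1P[->|us]; first exact: small.
    exact/small/(path_induced_subset ps).
  have := path_dist_le (sub_path (@induced_sub _ e C) ps) on_path cq.
  rewrite ls => /(_ _ xp) /le_trans; apply; apply: ler_wpM2r.
    apply: le_trans (small c cC); exact: diam_ge0.
  by rewrite ler_nat ltnS.
(* An empty centre object has no neighbours, so C = [set c]: any q works. *)
exists (fun=> 0) => x p xC xp; exfalso; apply: no_pt.
have [[|u s] [_ /= ps lx]] := hc x xC; first by exists p; rewrite -lx in xp.
have [t [ct _]] := e_meet (induced_sub (andP ps).1); by exists t.
Qed.

Hypothesis e_sym : symmetric e.

Lemma adjacent_cluster_reaches_large r B (q : point) (D : R) x y z :
  0 <= D -> (forall p, obj x p -> dist q p <= r.+1%:R * D) ->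
  shallow_cluster e r B -> z \in B -> D <= dl z -> y \in B -> e x y ->
  exists2 w, w \in B & D <= dl w /\
    exists2 t, obj w t & dist q t <= (3 * r + 1)%:R * D.
Proof.
move=> D0 near_x clB zB Dz yB exy.
have [p [xp yp]] := e_meet exy.
have [s [sz ps ls]] := shallow_cluster_path e_sym clB yB zB.
have [|w ws [Dw [t wt pt]]] :=
  path_reaches_large D0 (sub_path (@induced_sub _ e B) ps) _ yp.
  by rewrite ls.
exists w.
  by move: ws; rewrite inE => /predU1P[->|/(path_induced_subset ps)].
split => //; exists t => //; apply: le_trans (dist_triangle q p t) _.
have : (size s)%:R * D <= r.*2%:R * D by rewrite ler_wpM2r // ler_nat.
have -> : (3 * r + 1)%:R * D = r.+1%:R * D + r.*2%:R * D.
  by rewrite -mulrDl -natrD -addnn; congr (_%:R * _); lia.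
have := near_x p xp; lra.
Qed.

End ObjectChains.

Lemma card_bigcup_le (T I : finType) (P : pred I) (F : I -> {set T}) :
  (#|\bigcup_(i | P i) F i| <= \sum_(i | P i) #|F i|)%N.
Proof.
elim/big_rec2: _ => [|i B n _ IH]; first by rewrite cards0.
exact: leq_trans (leq_card_setU _ _).1 (leq_add _ IH).
Qed.

Definition ball_cover (R : realType) (d : nat) (q : Pilot.Defs.point R d)
    (D : R) (L N : nat) : Prop :=
  exists (I : finType) (J : {set I}) (o : I -> set (Pilot.Defs.point R d)),
  [/\ (#|J| <= N)%N,
      forall i, i \in J -> forall x y, o i x -> o i y -> dist x y <= D
    & forall x, dist q x <= L%:R * D -> exists2 i, i \in J & o i x].

Section Packing.
Variables (R : realType) (d : nat) (V : finType).
Local Notation point := (Pilot.Defs.point R d).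
Variables (obj : V -> set point) (rho : R).
Hypothesis rho_ge0 : 0 <= rho.
Hypothesis obj_density : has_density obj rho.
Local Notation dl v := (diam (obj v)).

Lemma card_disjoint_reaching_le (I : finType) (S : {set I})
    (cl : I -> {set V}) (q : point) (D : R) (L N : nat) :
  0 <= D -> ball_cover q D L N ->
  (forall a b, a != b -> cl a :&: cl b == finset.set0) ->
  (forall b, b \in S -> exists2 w, w \in cl b & D <= dl w /\
     exists2 t, obj w t & dist q t <= L%:R * D) ->
  #|S|%:R <= N%:R * rho.
Proof.
move=> D0 [K [J [o [cardJ diamJ coverJ]]]] disj reach.
pose hit j := [set v | `[< (obj v `&` o j !=set0)%classic >]
                       && (diam (o j) <= dl v)].
have card_hit j : j \in J -> #|hit j|%:R <= rho.
  move=> jJ; have := obj_density (ex_intro _ D (diamJ j jJ)).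
  congr (_%:R <= _); apply: eq_card => v; rewrite inE.
  by apply/idP/idP => [/set_mem|vo]; last exact/mem_set.
pose U := \bigcup_(j in J) hit j.
have [->|[b0 b0S]] := finset.set_0Vmem S; first by rewrite cards0 mulr_ge0.
have [w0 _ _] := reach b0 b0S.
have witness b : exists w, b \in S -> w \in cl b /\ w \in U.
  have [bS|_] := boolP (b \in S); last by exists w0.
  have [w wb [Dw [t wt qt]]] := reach b bS; exists w => _; split => //.
  have [j jJ ojt] := coverJ t qt.
  apply/finset.bigcupP; exists j => //; rewrite inE; apply/andP; split.
    by apply/asboolP; exists t.
  by apply: le_trans Dw; apply: diam_le D0 _; exact: diamJ.
have [f hf] := choice witness.
have f_inj : {in S &, injective f}.
  move=> b1 b2 b1S b2S fb; apply/eqP; apply: contraT => b12.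
  have /eqP/finset.setP/(_ (f b1)) := disj _ _ b12.
  by rewrite inE (hf _ b1S).1 fb (hf _ b2S).1 inE.
have SU : (#|S| <= #|U|)%N.
  rewrite -(card_in_imset f_inj); apply/subset_leq_card/fintype.subsetP => v.
  by case/finset.imsetP => b bS ->; exact: (hf b bS).2.
apply: (@le_trans _ _ (\sum_(j in J) (#|hit j|%:R : R))).
  by rewrite -natr_sum ler_nat (leq_trans SU (card_bigcup_le _ _)).
apply: le_trans (ler_sum _ card_hit) _.
by rewrite sumr_const -[rho *+ _]mulr_natl ler_wpM2r ?ler_nat.
Qed.

End Packing.

Lemma card_edges_le_sum_up (disp : Order.disp_t) (T : orderType disp)
    (W : finType) (eK : rel W) (f : W -> T) :
  (#|edges eK| <=
     \sum_a #|[set b | [&& b != a, eK a b || eK b a & (f a <= f b)%O]]|)%N.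
Proof.
pose up a := [set b | [&& b != a, eK a b || eK b a & (f a <= f b)%O]].
apply: (@leq_trans #|\bigcup_a [set [set a; b] | b in up a]|).
  apply/subset_leq_card/fintype.subsetP => E; rewrite inE.
  case/existsP => a /existsP[b /and3P[ab eab /eqP->]].
  apply/finset.bigcupP; have [fab|fba] := leP (f a) (f b).
    exists a => //; apply/finset.imsetP.
    by exists b; rewrite // inE eq_sym ab eab.
  exists b => //; apply/finset.imsetP; exists a; last by rewrite finset.setUC.
  by rewrite inE ab eab orbT ltW.
apply: leq_trans (card_bigcup_le _ _) _.
by apply: leq_sum => a _; exact: leq_imset_card.
Qed.

Section ShallowMinorsOfDenseGraphs.
Variables (R : realType) (d : nat) (V : finType).
Local Notation point := (Pilot.Defs.point R d).
Variables (obj : V -> set point) (rho : R).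
Hypothesis rho_ge0 : 0 <= rho.
Hypothesis obj_bounded : forall v, bounded_obj (obj v).
Hypothesis obj_density : has_density obj rho.
Variable e : rel V.
Hypothesis e_meet : forall u v, e u v -> exists p, obj u p /\ obj v p.
Hypothesis e_sym : symmetric e.
Local Notation dl v := (diam (obj v)).

Lemma shallow_minor_edges_le (r N : nat) (W : finType) (eK : rel W)
    (cl : W -> {set V}) :
  (forall (q : point) (D : R), 0 <= D -> ball_cover q D (3 * r + 1) N) ->
  shallow_minor e r eK cl -> #|edges eK|%:R <= #|W|%:R * (N%:R * rho).
Proof.
move=> cover [shallow disj adj].
have /choice[top top_max] : forall a, exists t,
    t \in cl a /\ {in cl a, forall v, dl v <= dl t}.
  move=> a; have [c cC _] := shallow a.
  exists [arg max_(v > c in cl a) dl v]%O.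
  by case: Order.TotalTheory.arg_maxP => // v vC vmax; split => // u /vmax.
pose D a := dl (top a).
have D_ge0 a : 0 <= D a by exact: diam_ge0.
have /choice[q near_q] : forall a, exists q : point, forall x p,
    x \in cl a -> obj x p -> dist q p <= r.+1%:R * D a.
  move=> a; have [_ small] := top_max a.
  by have := shallow_cluster_ball obj_bounded e_meet (shallow a) small.
pose up a := [set b | [&& b != a, eK a b || eK b a & (D a <= D b)%O]].
have card_up a : #|up a|%:R <= N%:R * rho.
  have := card_disjoint_reaching_le rho_ge0 obj_density (D_ge0 a)
    (cover (q a) _ (D_ge0 a)) disj; apply.
  move=> b; rewrite inE => /and3P[ba eab Dab].
  have [x [y [xa yb exy]]] : exists x y, [/\ x \in cl a, y \in cl b & e x y].
    case/orP: eab => [eab|eba]; first by apply: adj; rewrite // eq_sym.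
    by have [y [x [? ? ?]]] := adj b a ba eba; exists x, y; rewrite e_sym.
  have [zb _] := top_max b.
  by have := adjacent_cluster_reaches_large obj_bounded e_meet e_sym (D_ge0 a)
    (near_q a x ^~ xa) (shallow b) zb Dab yb exy.
apply: (@le_trans _ _ (\sum_a (#|up a|%:R : R))).
  by rewrite -natr_sum ler_nat card_edges_le_sum_up.
apply: le_trans (ler_sum _ (fun a _ => card_up a)) _.
by rewrite sumr_const [leRHS]mulr_natl.
Qed.

End ShallowMinorsOfDenseGraphs.

Lemma nabla_le (R : realType) (V : finType) (e : rel V) (r : nat) (M : R) :
  0 <= M ->
  (forall (W : finType) (eK : rel W) (cl : W -> {set V}),
     shallow_minor e r eK cl -> #|edges eK|%:R <= #|W|%:R * M) ->
  nabla e R r <= M.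
Proof.
move=> M0 bound; apply: ge_sup.
  exists 0, void, (fun _ _ => false), (fun _ => finset.set0); split.
    by split; case.
  by rewrite card_void invr0 mulr0.
move=> _ [W [eK [cl [minor ->]]]].
have [->|Wpos] := posnP #|W|; first by rewrite invr0 mulr0.
rewrite ler_pdivrMr ?ltr0n // [leRHS]mulrC; exact: (bound W eK cl minor).
Qed.

Section LatticeWeights.
Variable R : realFieldType.

Lemma cauchy_weight_le_telescope (a t k : R) :
  0 < a -> a <= t ^+ 2 -> 1 <= t -> 0 <= k ->
  a / (a + k ^+ 2) <= 4 * t ^+ 2 / (k + t) - 4 * t ^+ 2 / (k + t + 1).
Proof.
move=> a0 at2 t1 k0.
have kt0 : 0 < k + t by lra.
have kt1 : 0 < k + t + 1 by lra.
have -> : 4 * t ^+ 2 / (k + t) - 4 * t ^+ 2 / (k + t + 1) =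
          4 * t ^+ 2 / ((k + t) * (k + t + 1)).
  by field; rewrite (lt0r_neq0 kt0) (lt0r_neq0 kt1).
rewrite ler_pdivrMr; last by have := sqr_ge0 k; lra.
rewrite mulrAC ler_pdivlMr; last by apply: mulr_gt0.
have : (k + t) * (k + t + 1) <= 4 * (k ^+ 2 + t ^+ 2).
  have := sqr_ge0 (k - t); have := sqr_ge0 (4 * k - 1).
  have : 0 <= t * (t - 1) by apply: mulr_ge0; lra.
  have : 0 <= (t - 1) * (t + 1) by apply: mulr_ge0; lra.
  nra.
move=> /(ler_wpM2l (ltW a0)).
have : a * k ^+ 2 <= t ^+ 2 * k ^+ 2 by apply: ler_wpM2r => //; exact: sqr_ge0.
nra.
Qed.

Lemma sum_cauchy_weight_le (A T n : nat) : (0 < A)%N -> (A <= T * T)%N ->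
  \sum_(k < n) (A%:R / (A%:R + k%:R ^+ 2) : R) <= 4 * T%:R.
Proof.
move=> A0 AT; have T0 : (0 < T)%N by nia.
have a0 : (0 : R) < A%:R by rewrite ltr0n.
have at2 : (A%:R : R) <= T%:R ^+ 2 by rewrite -natrX ler_nat -mulnn.
have t1 : (1 : R) <= T%:R by rewrite ler1n.
pose u k : R := - (4 * T%:R ^+ 2 / (k%:R + T%:R)).
apply: (@le_trans _ _ (\sum_(k < n) (u k.+1 - u k))).
  apply: ler_sum => k _.
  apply: le_trans (cauchy_weight_le_telescope a0 at2 t1 (ler0n _ k)) _.
  by rewrite /u -[k.+1%:R]natr1 [_ + 1 + _]addrAC; lra.
rewrite -(big_mkord xpredT (fun k => u k.+1 - u k)) telescope_sumr // /u.
rewrite add0r opprK.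
have -> : 4 * T%:R ^+ 2 / T%:R = 4 * T%:R :> R.
  by field; rewrite pnatr_eq0 -lt0n.
suff : 0 <= 4 * T%:R ^+ 2 / (n%:R + T%:R) :> R by lra.
by rewrite divr_ge0 ?addr_ge0 ?mulr_ge0 ?sqr_ge0.
Qed.

Lemma prod_one_add_sqr_le (d A : nat) (z : 'I_d -> nat) : (0 < A)%N ->
  (\sum_i z i ^ 2 <= d * A)%N ->
  \prod_i (1 + (z i)%:R ^+ 2 / A%:R : R) <= 2 ^+ d.
Proof.
move=> A0 hz; have a0 : (0 : R) < A%:R by rewrite ltr0n.
case: d z hz => [|d] z hz; first by rewrite big_ord0 expr0.
have terms_ge0 : {in predT, forall i, (0 : R) <= 1 + (z i)%:R ^+ 2 / A%:R}.
  by move=> i _; rewrite addr_ge0 ?divr_ge0 ?sqr_ge0 ?ltW.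
apply: le_trans (leif_AGM terms_ge0).1 _; rewrite card_ord.
apply: lerXn2r; rewrite ?nnegrE ?divr_ge0 ?sumr_ge0 //.
rewrite ler_pdivrMr ?ltr0n // big_split /= sumr_const card_ord -mulr_suml.
have : (\sum_(i < d.+1) (z i)%:R ^+ 2 : R) / A%:R <= d.+1%:R.
  rewrite ler_pdivrMr // -natrM -(eq_bigr _ (fun i _ => natrX _ _ _)).
  by rewrite -natr_sum ler_nat.
rewrite -[1 *+ _]mulr_natl mulr1; lra.
Qed.

End LatticeWeights.

(* Each point z of the ball gets weight prod_i A/(A + z_i^2) >= 2^-d, and the
   total weight of all of N^d is (sum_k A/(A + k^2))^d <= (4 T)^d. *)
Lemma card_lattice_ball_le (d A T B : nat) : (0 < A)%N -> (A <= T * T)%N ->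
  (#|[set z : {ffun 'I_d -> 'I_B} | (\sum_i z i ^ 2 <= d * A)%N]|
     <= (8 * T) ^ d)%N.
Proof.
move=> A0 AT; rewrite -(ler_nat rat); set ball := [set z | _].
pose w (k : nat) : rat := A%:R / (A%:R + k%:R ^+ 2).
have a0 : (0 : rat) < A%:R by rewrite ltr0n.
have w_ge0 k : 0 <= w k by rewrite divr_ge0 ?addr_ge0 ?sqr_ge0 ?ltW.
have weight_ge1 z : z \in ball -> 1 <= 2 ^+ d * \prod_i w (z i).
  rewrite inE => /(@prod_one_add_sqr_le rat d A (fun i => z i) A0) hz.
  have -> : \prod_i w (z i) = (\prod_i (1 + (z i)%:R ^+ 2 / A%:R))^-1.
    rewrite -prodfV; apply: eq_bigr => i _; rewrite /w.
    have : (0 : rat) < A%:R + (z i)%:R ^+ 2 by rewrite ltr_wpDr ?sqr_ge0.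
    by move=> /lt0r_neq0 nz; field; rewrite (lt0r_neq0 a0) nz.
  rewrite ler_pdivlMr ?mul1r // prodr_gt0 // => i _.
  by rewrite ltr_wpDr ?divr_ge0 ?sqr_ge0 ?ltW.
apply: (@le_trans _ _ (\sum_(z in ball) 2 ^+ d * \prod_i w (z i))).
  by rewrite -sum1_card natr_sum ler_sum.
apply: (@le_trans _ _ (\sum_(z : {ffun 'I_d -> 'I_B}) 2 ^+ d * \prod_i w (z i))).
  rewrite [leRHS](bigID (mem ball)) /= lerDl sumr_ge0 // => z _.
  by rewrite mulr_ge0 ?exprn_ge0 ?prodr_ge0.
rewrite -big_distrr /= -(bigA_distr_bigA (fun (i : 'I_d) (k : 'I_B) => w k)) /=.
rewrite prodr_const card_ord natrX -exprMn lerXn2r ?nnegrE ?mulr_ge0 ?sumr_ge0 //.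
have := @sum_cauchy_weight_le rat A T B A0 AT.
rewrite (_ : 8 * T = 2 * (4 * T))%N ?natrM ?mulnA //.
by rewrite ler_pM2l.
Qed.

Lemma exists_nat_sqrt (n : nat) : exists k, (k * k <= n < k.+1 * k.+1)%N.
Proof.
elim: n => [|n [k /andP[kn nk]]]; first by exists 0%N.
have [lt|ge] := ltnP n.+1 (k.+1 * k.+1); first by exists k; rewrite lt andbT ltnW.
by exists k.+1; rewrite ge /=; nia.
Qed.

Section GridCover.
Variables (R : realType) (d : nat).
Local Notation point := (Pilot.Defs.point R d).

Lemma floor_cell_sqr_dist_le (q x y : point) (s : R) : 0 < s ->
  (forall i, Num.floor ((x i - q i) / s) = Num.floor ((y i - q i) / s)) ->
  \sum_i (x i - y i) ^+ 2 <= s ^+ 2 *+ d.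
Proof.
move=> s0 same; rewrite -[X in s ^+ 2 *+ X]card_ord -sumr_const.
apply: ler_sum => i _.
set a := (x i - q i) / s; set b := (y i - q i) / s.
have -> : x i - y i = s * (a - b) by rewrite /a /b; field; exact: lt0r_neq0.
have := floor_itv a; have := floor_itv b; rewrite same !intrD /=.
move=> /andP[b1 b2] /andP[a1 a2]; rewrite exprMn ler_piMr ?sqr_ge0 //; nra.
Qed.

Lemma sum_sqr_floor_le (u : 'I_d -> R) (K : nat) : \sum_i u i ^+ 2 <= K%:R ->
  (\sum_i `|Num.floor (u i)|%N ^ 2 <= 2 * K + 2 * d)%N.
Proof.
move=> uK; rewrite -(ler_nat R) natr_sum.
apply: (@le_trans _ _ (\sum_i (2 * u i ^+ 2 + 2))).
  apply: ler_sum => i _.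
  rewrite natrX natr_absz intr_norm real_normK ?num_real //.
  have := floor_itv (u i); rewrite intrD /= => /andP[lo hi].
  have := sqr_ge0 (2 * u i - (Num.floor (u i))%:~R); nra.
rewrite big_split /= -mulr_sumr sumr_const card_ord natrD !natrM.
by rewrite -[2 *+ d]mulr_natl; lra.
Qed.

Lemma sum_sqr_floor_coord_le (q x : point) (s : R) (L m : nat) : 0 < s ->
  (m * m <= 4 * d)%N -> dist q x <= L%:R * (s * m%:R) ->
  (\sum_i `|Num.floor ((x i - q i) / s)|%N ^ 2 <= d * (8 * L * L + 2))%N.
Proof.
move=> s0 m_sqr_le xq; pose u i := (x i - q i) / s.
have u_sum : \sum_i u i ^+ 2 <= ((L * m) ^ 2)%:R.
  move: xq; rewrite distC dist_leE => [xq|]; last first.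
    by rewrite !mulr_ge0 // ltW.
  rewrite [X in _ <= X](_ : _ = (L%:R * (s * m%:R)) ^+ 2 / s ^+ 2); last first.
    by rewrite natrX natrM; field; exact: lt0r_neq0.
  rewrite ler_pdivlMr ?exprn_gt0 // mulr_suml.
  rewrite (eq_bigr (fun i => (x i - q i) ^+ 2)) // => i _.
  by rewrite /u expr_div_n divfK // expf_neq0 // lt0r_neq0.
apply: leq_trans (sum_sqr_floor_le u_sum) _.
by have := leq_mul (leqnn (L * L)) m_sqr_le; nia.
Qed.

(* Cells of the grid of mesh D / m with m^2 >= d have diameter at most D, and
   by the choice m^2 <= 4 d the cells meeting the ball are indexed by lattice
   points of a ball of squared radius d (8 L^2 + 2). *)
Lemma ball_cover_grid (q : point) (D : R) (L : nat) : 0 < D -> (0 < d)%N ->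
  ball_cover q D L ((16 * (3 * L + 2)) ^ d).
Proof.
move=> D0 d0; have [k /andP[kd dk]] := exists_nat_sqrt d.
set m := k.+1; have m_sqr_le : (m * m <= 4 * d)%N by rewrite /m; nia.
have [s s0 Dsm] : exists2 s : R, 0 < s & D = s * m%:R.
  by exists (D / m%:R); rewrite ?divr_gt0 ?ltr0n ?divfK ?pnatr_eq0.
pose A := (8 * L * L + 2)%N.
pose ball := [set z : {ffun 'I_d -> 'I_(d * A).+1} | (\sum_i z i ^ 2 <= d * A)%N].
pose I := ({ffun 'I_d -> bool} * {ffun 'I_d -> 'I_(d * A).+1})%type.
pose coord (p : I) i : int := (-1) ^+ p.1 i * (p.2 i : nat)%:Z.
pose cell (p : I) : set point :=
  fun x => forall i, Num.floor ((x i - q i) / s) = coord p i.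
exists I, (finset.setX [set: {ffun 'I_d -> bool}] ball), cell; split.
- rewrite finset.cardsX finset.cardsT card_ffun card_bool card_ord.
  rewrite (_ : 16 * _ = 2 * (8 * (3 * L + 2)))%N; last by lia.
  rewrite expnMn leq_mul //.
  by rewrite /ball; apply: card_lattice_ball_le; rewrite /A; nia.
- move=> p _ x y cx cy; rewrite dist_leE; last exact: ltW.
  have same i : Num.floor ((x i - q i) / s) = Num.floor ((y i - q i) / s).
    by rewrite cx cy.
  apply: le_trans (floor_cell_sqr_dist_le s0 same) _.
  rewrite Dsm exprMn -mulr_natr; apply: ler_wpM2l; first exact: sqr_ge0.
  by rewrite -natrX ler_nat -mulnn ltnW.
move=> x xq; pose u i := (x i - q i) / s.
have floor_sum : (\sum_i `|Num.floor (u i)|%N ^ 2 <= d * A)%N.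
  by apply: sum_sqr_floor_coord_le s0 m_sqr_le _; rewrite -Dsm.
have floor_le i : (`|Num.floor (u i)|%N < (d * A).+1)%N.
  rewrite ltnS; apply: leq_trans floor_sum; rewrite (bigD1 i) //=.
  by apply: leq_trans (leq_addr _ _); nia.
pose p : I := ([ffun i => Num.floor (u i) < 0],
               [ffun i => inord `|Num.floor (u i)|%N]).
have p2 i : (p.2 i : nat) = `|Num.floor (u i)|%N by rewrite ffunE inordK.
exists p => [|i]; last by rewrite /coord p2 ffunE -intEsign.
rewrite finset.in_setX finset.in_setT inE.
by rewrite (eq_bigr _ (fun i _ => congr1 (expn^~ 2) (p2 i))).
Qed.

Lemma ball_cover_degenerate (q : point) (D : R) (L N : nat) :
  0 <= D -> (0 < N)%N -> D = 0 \/ d = 0%N -> ball_cover q D L N.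
Proof.
move=> D0 N0 degenerate.
exists unit, [set: unit]%SET, (fun _ x => dist q x <= L%:R * D); split.
- by rewrite finset.cardsT card_unit.
- move=> _ _ x y qx qy; case: degenerate => [D_eq0|d_eq0].
    rewrite D_eq0 mulr0 in qx qy *; apply: le_trans (dist_triangle x q y) _.
    by rewrite distC; have := dist_ge0 q x; have := dist_ge0 q y; lra.
  rewrite /dist big1 ?sqrtr0 // => i.
  by have := ltn_ord i; rewrite [in X in (_ < X)%N]d_eq0.
- by move=> x qx; exists tt; rewrite ?inE.
Qed.

Lemma ball_coverP (q : point) (D : R) (L : nat) : 0 <= D ->
  ball_cover q D L ((16 * (3 * L + 2)) ^ d).
Proof.
move=> D0; have N0 : (0 < (16 * (3 * L + 2)) ^ d)%N by rewrite expn_gt0 addn2.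
have [d_eq0|d_gt0] := posnP d.
  exact: ball_cover_degenerate D0 N0 (or_intror d_eq0).
have [D_eq0|D_neq0] := eqVneq D 0.
  exact: ball_cover_degenerate D0 N0 (or_introl D_eq0).
by apply: ball_cover_grid; rewrite // lt0r D_neq0.
Qed.

End GridCover.

Theorem mainTheorem10 :
  exists c : nat,
    forall (R : realType) (d : nat) (rho : R), 0 < rho ->
    forall (V : finType) (e : rel V), rho_dense d e rho ->
    forall r : nat,
      nabla e R r <= rho * ((c * r.+1) ^ (c * d))%:R.
Proof.
exists 144%N => R d rho rho0 V e [obj [bounded [density intersection]]] r.
have e_meet u v : e u v -> exists p, obj u p /\ obj v p.
  by rewrite intersection => /andP[_ /asboolP[p [up vp]]]; exists p.
have e_sym : symmetric e by move=> u v; rewrite !intersection eq_sym setIC.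
apply: (@le_trans _ _ (((16 * (3 * (3 * r + 1) + 2)) ^ d)%:R * rho)).
  apply: nabla_le => [|W eK cl minor]; first by rewrite mulr_ge0 // ltW.
  have cover (q : Pilot.Defs.point R d) (D : R) :
    0 <= D -> ball_cover q D (3 * r + 1) _ := ball_coverP q _.
  by have := shallow_minor_edges_le (ltW rho0) bounded density e_meet e_sym
    cover minor.
rewrite mulrC; apply: ler_wpM2l; first exact: ltW.
rewrite ler_nat; apply: (@leq_trans ((144 * r.+1) ^ d)).
  by have [->//|d0] := posnP d; rewrite leq_exp2r //; lia.
by rewrite leq_pexp2l ?muln_gt0 ?leq_pmull.
Qed.
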